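(* Let $(X;Y,Z)$ be a non-degenerate subwing triple in $\mathcal{C}_n$, and let $Y'\in\mathcal{W}_Y$ and $Z'\in\mathcal{W}_Z$. (i) There are no nonzero $\mathcal{T}$-maps $Z'\to Y'$. (ii) There are no nonzero $\mathcal{T}$-maps $Y'\to Z'$. (iii) There is a nonzero $\mathcal{D}$-map $Z'\to Y'$ if and only if $Z'$ is on the left edge of $\mathcal{W}_Z$ and $Y'$ is on the right edge of $\mathcal{W}_Y$; in this case this map factors through the (nonzero) $\mathcal{D}$-map $Z\to Y$. (iv) There is a nonzero $\mathcal{D}$-map $Y'\to Z'$ if and only if $Z'$ is on the right edge of $\mathcal{W}_Z$, $Y'$ is on the left edge of $\mathcal{W}_Y$, and $\operatorname{ql}X=n-1$; in this case this map factors through the nonzero $\mathcal{D}$-endomorphism of $X$.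
   Context: Let $k$ be algebraically closed, $n\ge2$, $\mathcal{T}_n$ the tube of rank $n$ (finite-dimensional nilpotent representations of the cyclically oriented $\tilde A_{n-1}$-quiver; hereditary, AR-translation $\tau$), $\mathcal{C}_n=D^b(\mathcal{T}_n)/\tau^{-1}[1]$ the cluster tube, with indecomposables identified with those of $\mathcal{T}_n$. Indecomposables have coordinates $(a,b)$, $a\in\mathbb{Z}/n$, $b\ge1$ the quasilength $\operatorname{ql}$, with $\tau(a,b)=(a-1,b)$ and irreducible maps $(a,b)\to(a,b+1)$ and $(a,b)\to(a+1,b-1)$ ($b\ge2$). For indecomposables $X,Y$, $\operatorname{Hom}_{\mathcal{C}_n}(X,Y)=\operatorname{Hom}_{\mathcal{T}_n}(X,Y)\oplus\operatorname{Hom}_{D^b}(X,\tau^{-1}Y[1])$, the second summand $\cong D\operatorname{Hom}_{\mathcal{T}_n}(Y,\tau^2X)$; elements of the first are $\mathcal{T}$-maps, of the second $\mathcal{D}$-maps. For $X=(a,i)$, $i\le n-1$, the wing $\mathcal{W}_X$ is $\{(a+s,i'):s\ge0,i'\ge1,s+i'\le i\}$, with left edge $\{(a,i'):1\le i'\le i\}$ and right edge $\{(a+i-i',i'):1\le i'\le i\}$. A non-degenerate subwing triple $(X;Y,Z)$ consists of $X=(a,b)$ with $3\le b\le n-1$, $Y=(a,c)$ and $Z=(a+c+1,b-c-1)$ for some $1\le c\le b-2$. *)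

From mathcomp Require Import all_boot all_algebra.
Unset Printing Implicit Defensive.
Import GRing.Theory.
Local Open Scope ring_scope.

Section Tube.
Variable k : fieldType.

(* The indecomposable (a,b) (a read modulo n, b = quasilength) is the uniserial
   nilpotent representation of the cyclic quiver with basis e_0,...,e_(b-1),
   e_j sitting at vertex a+j (mod n), with arrows acting by the nilpotent shift
   N e_j = e_(j-1), N e_0 = 0.  So (a,b) has socle at vertex a; (a,b) -> (a,b+1)
   is the irreducible mono and (a,b) -> (a+1,b-1) the irreducible epi. *)
Definition nilp (b : nat) : 'M[k]_b := \matrix_(i, j) ((i.+1 == j :> nat)%:R).

(* A T-map (a,b) -> (c,d): matrix f : 'M_(d,b) (f l j = coefficient of e'_l in
   f(e_j)) commuting with the arrows and preserving the vertex grading. *)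
Definition is_Tmap (n a b c d : nat) (f : 'M[k]_(d, b)) : bool :=
  (f *m nilp b == nilp d *m f) &&
  [forall l : 'I_d, forall j : 'I_b,
      (f l j != 0) ==> (c + l == a + j %[mod n])%N].

(* first coordinate of tau^2 (a,b) = (a-2,b), read modulo n (n >= 2) *)
Definition tau2 (n a : nat) : nat := (a + (n - 2))%N.

(* D-maps X -> Y are elements of D Hom_T(Y, tau^2 X); every linear functional on
   'M_(m,p) is h |-> pairing Phi h for a unique Phi. *)
Definition pairing m p (Phi h : 'M[k]_(m, p)) : k :=
  \sum_(i < m) \sum_(j < p) Phi i j * h i j.

Definition Dmap_nz (n a b c d : nat) (Phi : 'M[k]_(b, d)) : Prop :=
  exists h : 'M[k]_(b, d), is_Tmap n c d (tau2 n a) b h /\ pairing b d Phi h != 0.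

(* The D-map Psi : S' -> T' factors as g o Phi o f through a nonzero D-map
   Phi : S -> T, with T-maps f : S' -> S and g : T -> T'.  The composite
   g o Phi o f in D Hom_T(T', tau^2 S') is h |-> Phi(tau^2(f) o h o g), and
   tau^2 acts on matrices as the identity in this model. *)
Definition Dfactors (n s1' s2' t1' t2' s1 s2 t1 t2 : nat)
    (Psi : 'M[k]_(s2', t2')) : Prop :=
  exists (Phi : 'M[k]_(s2, t2)) (f : 'M[k]_(s2, s2')) (g : 'M[k]_(t2', t2)),
    [/\ Dmap_nz n s1 s2 t1 t2 Phi, is_Tmap n s1' s2' s1 s2 f,
        is_Tmap n t1 t2 t1' t2' g &
        forall h : 'M[k]_(s2', t2'), is_Tmap n t1' t2' (tau2 n s1') s2' h ->
          pairing s2' t2' Psi h = pairing s2 t2 Phi (f *m h *m g)].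

End Tube.

Definition in_wing (n a i a' i' : nat) : Prop :=
  exists s : nat, (a' == a + s %[mod n])%N /\ (1 <= i')%N /\ (s + i' <= i)%N.
Definition left_edge (n a i a' i' : nat) : Prop :=
  (a' == a %[mod n])%N /\ (1 <= i' <= i)%N.
Definition right_edge (n a i a' i' : nat) : Prop :=
  (a' == a + i - i' %[mod n])%N /\ (1 <= i' <= i)%N.
Arguments nilp {k} b.
Arguments is_Tmap {k} n a b c d f.
Arguments pairing {k} m p Phi h.
Arguments Dmap_nz {k} n a b c d Phi.
Arguments Dfactors {k} n s1' s2' t1' t2' s1 s2 t1 t2 Psi.

From Pilot Require Import Defs.
From mathcomp Require Import all_boot all_algebra.
From mathcomp Require Import zify.
Set Implicit Arguments. Unset Strict Implicit.
Import GRing.Theory.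

(* T-maps preserve the vertex grading, so everything is decided by the residues
   mod n of the vertices.  With Y' = (a+s, y2) and Z' = (a+c+1+t, z2), the
   vertices of Y' lie in [a, a+c-1] and those of Z' in [a+c+1, a+b-1], inside a
   window of length b < n, so no graded map joins them.  A D-map Z' -> Y' is a
   functional on Hom(Y', tau^2 Z'), and a nonzero graded map Y' -> tau^2 Z' must
   send the top a+s+y2-1 <= a+c-1 of Y' to the socle a+c-1+t of tau^2 Z'; hence
   t = 0 and s + y2 = c, i.e. the edge conditions.  That Hom space is then
   spanned by one corner matrix, so the functional factors through the one for
   Z -> Y.  For Y' -> Z' the top of Z', at most a+b-1, must meet the socle of
   tau^2 Y', which is a+s+n-2 >= a+b-1 mod n; equality forces s = 0, Z' ending
   at a+b-1 and b = n-1, and the factorisation goes through X -> X. *)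

Lemma eq_mod_window n x y : x = y %[mod n] -> x <= y -> y < x + n -> x = y.
Proof.
move=> xy_mod le_xy lt_yxn; have def_y : y = x + (y - x) by lia.
move/eqP: xy_mod; rewrite {1}def_y -[x in x %% n]addn0 eq_sym eqn_modDl mod0n.
by rewrite modn_small ?subn_eq0; lia.
Qed.

Section TubeMaps.
Variable k : fieldType.
Local Open Scope ring_scope.

Lemma Tmap_graded n a b c d (f : 'M[k]_(d, b)) l j :
  is_Tmap n a b c d f -> f l j != 0 -> (c + l = a + j %[mod n])%N.
Proof. by move=> /andP[_ /forallP/(_ l)/forallP/(_ j)/implyP graded] /graded/eqP. Qed.

Lemma Tmap_eq0 n a b c d (f : 'M[k]_(d, b)) :
  is_Tmap n a b c d f ->
  (forall (l : 'I_d) (j : 'I_b), (c + l = a + j %[mod n])%N -> False) -> f = 0.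
Proof.
move=> fT ungraded; apply/matrixP => l j; rewrite mxE.
by apply/eqP/negP => /negP/(Tmap_graded fT)/ungraded.
Qed.

Definition shiftmx d b p : 'M[k]_(d, b) := \matrix_(l, j) (((l + p)%N == j :> nat)%:R).

Lemma shiftmx_id d b p (l : 'I_d) (j : 'I_b) : (l + p = j)%N -> shiftmx d b p l j = 1.
Proof. by move=> lpj; rewrite mxE lpj eqxx. Qed.

Lemma sum_ord_delta b x (G : nat -> k) :
  \sum_(m < b) ((x == m :> nat)%:R * G m) = if (x < b)%N then G x else 0.
Proof.
case: ifP => [xb | bx].
  rewrite (bigD1 (Ordinal xb)) //= eqxx mul1r big1 ?addr0 // => i ix.
  by case: eqP => [xi | _]; [rewrite -(inj_eq val_inj) /= xi eqxx in ix | rewrite mul0r].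
rewrite big1 // => i _; case: eqP => [xi | _]; last by rewrite mul0r.
by move: (ltn_ord i); rewrite -xi bx.
Qed.

Lemma shiftmx_nilp_comm d b p :
  (b <= d + p)%N -> shiftmx d b p *m Defs.nilp b = Defs.nilp d *m shiftmx d b p.
Proof.
move=> bdp; apply/matrixP => l j; rewrite !mxE.
under eq_bigr => m _ do rewrite !mxE.
under [RHS]eq_bigr => m _ do rewrite !mxE.
rewrite (sum_ord_delta _ (l + p) (fun m => (m.+1 == j)%:R)).
rewrite (sum_ord_delta _ l.+1 (fun m => (m + p == j)%:R)).
have := ltn_ord j; have := ltn_ord l.
by case: ifP; case: ifP => ? ? ? ? //; case: eqP => ? //; try case: eqP => ? //; lia.
Qed.

Lemma shiftmx_Tmap n a b c d p :
  (b <= d + p)%N -> (c = a + p %[mod n])%N -> is_Tmap n a b c d (shiftmx d b p).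
Proof.
move=> bdp cap; apply/andP; split; first by apply/eqP/shiftmx_nilp_comm.
apply/forallP => l; apply/forallP => j; apply/implyP; rewrite mxE.
case: ((l + p)%N =P j) => [<- _ | _ /negP[]]; last exact: eqxx.
by rewrite addnA -modnDml cap modnDml addnAC.
Qed.

Definition pointmx m p (i1 : 'I_m) (j1 : 'I_p) (x : k) : 'M[k]_(m, p) :=
  \matrix_(i, j) (if (i == i1) && (j == j1) then x else 0).

Lemma pairing_concentrated m p (Phi h : 'M[k]_(m, p)) i0 j0 :
  (forall i j, Phi i j * h i j != 0 -> i = i0 /\ j = j0) ->
  pairing m p Phi h = Phi i0 j0 * h i0 j0.
Proof.
move=> supp; rewrite /pairing (bigD1 i0) //= (bigD1 j0) //= big1 ?addr0.
  rewrite big1 ?addr0 // => i i_neq; rewrite big1 // => j _.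
  by apply/eqP/negPn/negP => /supp[i_eq _]; rewrite i_eq eqxx in i_neq.
by move=> j j_neq; apply/eqP/negPn/negP => /supp[_ j_eq]; rewrite j_eq eqxx in j_neq.
Qed.

Lemma pairing_pointmx m p (i1 : 'I_m) (j1 : 'I_p) x (h : 'M[k]_(m, p)) :
  pairing m p (pointmx i1 j1 x) h = x * h i1 j1.
Proof.
rewrite (pairing_concentrated (i0 := i1) (j0 := j1)); first by rewrite mxE !eqxx.
move=> i j; rewrite mxE.
by case: (i =P i1) => [-> | _]; case: (j =P j1) => [-> | _] //=; rewrite mul0r eqxx.
Qed.

Lemma mulmx3_concentrated m1 m2 m3 m4 (A : 'M[k]_(m1, m2)) (B : 'M[k]_(m2, m3))
    (C : 'M[k]_(m3, m4)) i l r0 s0 :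
  (forall r s, B r s != 0 -> r = r0 /\ s = s0) ->
  (A *m B *m C) i l = A i r0 * B r0 s0 * C s0 l.
Proof.
move=> supp; rewrite mxE (bigD1 s0) //= big1 ?addr0.
  rewrite mxE (bigD1 r0) //= big1 ?addr0 // => r r_neq.
  have [-> | /supp[r_eq _]] := eqVneq (B r s0) 0; first by rewrite mulr0.
  by rewrite r_eq eqxx in r_neq.
move=> s s_neq; rewrite mxE big1 ?mul0r // => r _.
have [-> | /supp[_ s_eq]] := eqVneq (B r s) 0; first by rewrite mulr0.
by rewrite s_eq eqxx in s_neq.
Qed.

Lemma Dmap_nz_exists_iff n a b c d :
  (exists Psi : 'M[k]_(b, d), Dmap_nz n a b c d Psi) <->
  exists2 h : 'M[k]_(b, d), is_Tmap n c d (tau2 n a) b h & h != 0.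
Proof.
split=> [[Psi [h [hT pair_nz]]] | [h hT /matrix0Pn[i [j hij]]]].
  exists h => //; apply: contraNneq pair_nz => ->.
  by rewrite /pairing big1 // => i _; rewrite big1 // => j _; rewrite mxE mulr0.
by exists (pointmx i j 1), h; rewrite pairing_pointmx mul1r.
Qed.

Definition Tmaps_concentrated n a b c d (i0 : 'I_d) (j0 : 'I_b) :=
  forall h : 'M[k]_(d, b), is_Tmap n a b c d h ->
    forall i j, h i j != 0 -> i = i0 /\ j = j0.

Arguments Tmaps_concentrated n a b c d i0 j0 : clear implicits.

(* If every T-map T' -> tau^2 S' is supported at the entry (i0, j0), a nonzero
   D-map S' -> T' is a multiple of evaluation at (i0, j0).  When f and g carry
   that entry to (i1, j1) with coefficient 1, it is the composite of f, g and
   the same multiple of evaluation at (i1, j1), which is nonzero on h1. *)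

Lemma Dfactors_concentrated n s1' s2' t1' t2' s1 s2 t1 t2 (i0 : 'I_s2') (j0 : 'I_t2')
    (i1 : 'I_s2) (j1 : 'I_t2) (f : 'M[k]_(s2, s2')) (g : 'M[k]_(t2', t2))
    (h1 : 'M[k]_(s2, t2)) (Psi : 'M[k]_(s2', t2')) :
  Tmaps_concentrated n t1' t2' (tau2 n s1') s2' i0 j0 ->
  is_Tmap n s1' s2' s1 s2 f -> is_Tmap n t1 t2 t1' t2' g -> f i1 i0 = 1 -> g j0 j1 = 1 ->
  is_Tmap n t1 t2 (tau2 n s1) s2 h1 -> h1 i1 j1 != 0 ->
  Dmap_nz n s1' s2' t1' t2' Psi -> Dfactors n s1' s2' t1' t2' s1 s2 t1 t2 Psi.
Proof.
move=> conc fT gT f1 g1 h1T h1_nz [h [hT pair_nz]].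
have pairing_Psi h' : is_Tmap n t1' t2' (tau2 n s1') s2' h' ->
    pairing s2' t2' Psi h' = Psi i0 j0 * h' i0 j0.
  move=> h'T; apply: pairing_concentrated => i j; rewrite mulf_eq0 negb_or.
  by case/andP=> _; apply: conc.
have Psi_nz : Psi i0 j0 != 0.
  by apply: contraNneq pair_nz; rewrite pairing_Psi // => ->; rewrite mul0r.
exists (pointmx i1 j1 (Psi i0 j0)), f, g; split => //.
  by exists h1; rewrite pairing_pointmx mulf_neq0.
move=> h' h'T; rewrite pairing_pointmx pairing_Psi //.
by rewrite (mulmx3_concentrated _ _ _ _ (conc h' h'T)) f1 g1 mul1r mulr1.
Qed.

End TubeMaps.
Arguments Tmaps_concentrated : clear implicits.

Lemma in_wing_ql n a i a' i' : in_wing n a i a' i' -> 1 <= i' <= i.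
Proof. by case=> s [_ [? ?]]; apply/andP; split; lia. Qed.

Section SubwingTriple.
Variables n a b c y1 y2 z1 z2 : nat.
Hypotheses (b_bounds : 3 <= b <= n - 1) (c_bounds : 1 <= c <= b - 2).
Hypotheses (Y'_wing : in_wing n a c y1 y2) (Z'_wing : in_wing n (a + c + 1) (b - c - 1) z1 z2).

Lemma Y'_Z'_vertices_disjoint l j :
  l < y2 -> j < z2 -> y1 + l = z1 + j %[mod n] -> False.
Proof.
move: (Y'_wing) (Z'_wing) => [s [/eqP y1E [? ?]]] [t [/eqP z1E [? ?]]] ? ?.
rewrite -modnDml y1E modnDml -[in RHS]modnDml z1E modnDml => /eq_mod_window.
by clear y1E z1E; lia.
Qed.

Lemma tau2Z'_Y'_congr l j :
  l < z2 -> j < y2 -> tau2 n z1 + l = y1 + j %[mod n] ->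
  [/\ l = 0, j = y2.-1, left_edge n (a + c + 1) (b - c - 1) z1 z2
     & right_edge n a c y1 y2].
Proof.
move: (Y'_wing) (Z'_wing) => [s [/eqP y1E [? ?]]] [t [/eqP z1E [? ?]]] ? ?.
rewrite /tau2 -addnA -modnDml z1E modnDml -[in RHS]modnDml y1E modnDml => vertex_mod.
have [l0 j_last t0 sy2c] : [/\ l = 0, j = y2.-1, t = 0 & s + y2 = c].
  clear y1E z1E; move: vertex_mod.
  rewrite (_ : _ + (_ + l) = a + c + t + l - 1 + n) ?modnDr; last by lia.
  move=> /esym/eq_mod_window vertex_eq.
  have {}vertex_eq : a + s + j = a + c + t + l - 1 by apply: vertex_eq; lia.
  by split; lia.
split=> //.
  by split; [rewrite z1E t0 addn0 | exact: in_wing_ql Z'_wing].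
by split; [rewrite y1E -sy2c addnA addnK | exact: in_wing_ql Y'_wing].
Qed.

Lemma tau2Y'_Z'_congr l j :
  l < y2 -> j < z2 -> tau2 n y1 + l = z1 + j %[mod n] ->
  [/\ l = 0, j = z2.-1, right_edge n (a + c + 1) (b - c - 1) z1 z2,
     left_edge n a c y1 y2 & b = n - 1].
Proof.
move: (Y'_wing) (Z'_wing) => [s [/eqP y1E [? ?]]] [t [/eqP z1E [? ?]]] ? ?.
rewrite /tau2 -addnA -modnDml y1E modnDml -[in RHS]modnDml z1E modnDml => vertex_mod.
have [l0 j_last s0 tz2 b_max] :
    [/\ l = 0, j = z2.-1, s = 0, t + z2 = b - c - 1 & b = n - 1].
  clear y1E z1E; move: vertex_mod => /esym/eq_mod_window vertex_eq.
  have {}vertex_eq : a + c + 1 + t + j = a + s + (n - 2 + l) by apply: vertex_eq; lia.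
  by split; lia.
split=> //.
  by split; [rewrite z1E -tz2 addnA addnK | exact: in_wing_ql Z'_wing].
by split; [rewrite y1E s0 addn0 | exact: in_wing_ql Y'_wing].
Qed.

Variable k : fieldType.

Lemma Tmap_Y'Z'_eq0 (f : 'M[k]_(y2, z2)) : is_Tmap n z1 z2 y1 y2 f -> f = 0%R.
Proof. by move/Tmap_eq0; apply=> l j; apply: Y'_Z'_vertices_disjoint. Qed.

Lemma Tmap_Z'Y'_eq0 (f : 'M[k]_(z2, y2)) : is_Tmap n y1 y2 z1 z2 f -> f = 0%R.
Proof. by move/Tmap_eq0; apply=> l j /esym; apply: Y'_Z'_vertices_disjoint. Qed.

Lemma Dmap_Z'Y'_exists_iff :
  (exists Psi : 'M[k]_(z2, y2), Dmap_nz n z1 z2 y1 y2 Psi) <->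
  left_edge n (a + c + 1) (b - c - 1) z1 z2 /\ right_edge n a c y1 y2.
Proof.
rewrite Dmap_nz_exists_iff.
split=> [[h hT /matrix0Pn[l [j hlj]]] | [Z'_edge Y'_edge]].
  by have [] := tau2Z'_Y'_congr (ltn_ord l) (ltn_ord j) (Tmap_graded hT hlj).
have [[_ /andP[z2_pos _]] [_ /andP[y2_pos y2_le]]] := (Z'_edge, Y'_edge).
exists (shiftmx k z2 y2 y2.-1).
  apply: shiftmx_Tmap; first lia.
  case: Z'_edge Y'_edge => /eqP z1E _ [/eqP y1E _].
  rewrite /tau2 -modnDml z1E modnDml -[in RHS]modnDml y1E modnDml.
  by rewrite -[in RHS](modnDr _ n); congr (_ %% _); clear z1E y1E; lia.
have y2_last : y2.-1 < y2 by rewrite ltn_predL.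
apply/matrix0Pn; exists (Ordinal z2_pos), (Ordinal y2_last).
by rewrite shiftmx_id ?oner_neq0.
Qed.

Lemma Dmap_Z'Y'_factors (Psi : 'M[k]_(z2, y2)) :
  Dmap_nz n z1 z2 y1 y2 Psi -> Dfactors n z1 z2 y1 y2 (a + c + 1) (b - c - 1) a c Psi.
Proof.
move=> Psi_nz; have [Z'_edge Y'_edge] := proj1 Dmap_Z'Y'_exists_iff (ex_intro _ Psi Psi_nz).
have [[_ z2_le] [_ y2_le]] := (Z'_edge, Y'_edge).
have [z2_pos y2_last Z_pos Y_last] : [/\ 0 < z2, y2.-1 < y2, 0 < b - c - 1 & c.-1 < c].
  by split; lia.
have conc : Tmaps_concentrated k n y1 y2 (tau2 n z1) z2 (Ordinal z2_pos) (Ordinal y2_last).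
  move=> h hT l j /(Tmap_graded hT).
  by case/(tau2Z'_Y'_congr (ltn_ord l) (ltn_ord j)) => l0 j_last _ _; split; apply: val_inj.
have fT : is_Tmap n z1 z2 (a + c + 1) (b - c - 1) (shiftmx k (b - c - 1) z2 0).
  by apply: shiftmx_Tmap; [lia | case: Z'_edge => /eqP z1E _; rewrite addn0 z1E].
have gT : is_Tmap n a c y1 y2 (shiftmx k y2 c (c - y2)).
  apply: shiftmx_Tmap; first lia.
  by rewrite addnBA; [case: Y'_edge => /eqP | lia].
have h1T : is_Tmap n a c (tau2 n (a + c + 1)) (b - c - 1) (shiftmx k (b - c - 1) c c.-1).
  apply: shiftmx_Tmap; first lia.
  by rewrite /tau2 (_ : _ + (n - 2) = a + c.-1 + n) ?modnDr //; lia.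
apply: (Dfactors_concentrated (i1 := Ordinal Z_pos) (j1 := Ordinal Y_last) conc fT gT
  _ _ h1T _ Psi_nz); rewrite shiftmx_id ?oner_neq0 //=; lia.
Qed.

Lemma Dmap_Y'Z'_exists_iff :
  (exists Psi : 'M[k]_(y2, z2), Dmap_nz n y1 y2 z1 z2 Psi) <->
  [/\ right_edge n (a + c + 1) (b - c - 1) z1 z2, left_edge n a c y1 y2 & b = n - 1].
Proof.
rewrite Dmap_nz_exists_iff.
split=> [[h hT /matrix0Pn[l [j hlj]]] | [Z'_edge Y'_edge b_max]].
  by have [] := tau2Y'_Z'_congr (ltn_ord l) (ltn_ord j) (Tmap_graded hT hlj).
have [[_ /andP[z2_pos z2_le]] [_ /andP[y2_pos _]]] := (Z'_edge, Y'_edge).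
exists (shiftmx k y2 z2 z2.-1).
  apply: shiftmx_Tmap; first lia.
  case: Z'_edge Y'_edge => /eqP z1E _ [/eqP y1E _].
  rewrite /tau2 -modnDml y1E modnDml -[in RHS]modnDml z1E modnDml.
  by congr (_ %% _); clear z1E y1E; lia.
have z2_last : z2.-1 < z2 by rewrite ltn_predL.
apply/matrix0Pn; exists (Ordinal y2_pos), (Ordinal z2_last).
by rewrite shiftmx_id ?oner_neq0.
Qed.

Lemma Dmap_Y'Z'_factors (Psi : 'M[k]_(y2, z2)) :
  Dmap_nz n y1 y2 z1 z2 Psi -> Dfactors n y1 y2 z1 z2 a b a b Psi.
Proof.
move=> Psi_nz.
have [Z'_edge Y'_edge b_max] := proj1 Dmap_Y'Z'_exists_iff (ex_intro _ Psi Psi_nz).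
have [[_ z2_le] [_ y2_le]] := (Z'_edge, Y'_edge).
have [y2_pos z2_last X_pos X_last] : [/\ 0 < y2, z2.-1 < z2, 0 < b & b.-1 < b].
  by split; lia.
have conc : Tmaps_concentrated k n z1 z2 (tau2 n y1) y2 (Ordinal y2_pos) (Ordinal z2_last).
  move=> h hT l j /(Tmap_graded hT).
  by case/(tau2Y'_Z'_congr (ltn_ord l) (ltn_ord j)) => l0 j_last _ _ _; split; apply: val_inj.
have fT : is_Tmap n y1 y2 a b (shiftmx k b y2 0).
  by apply: shiftmx_Tmap; [lia | case: Y'_edge => /eqP y1E _; rewrite addn0 y1E].
have gT : is_Tmap n a b z1 z2 (shiftmx k z2 b (b - z2)).
  apply: shiftmx_Tmap; first lia.
  have -> : a + (b - z2) = a + c + 1 + (b - c - 1) - z2 by lia.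
  by case: Z'_edge => /eqP.
have h1T : is_Tmap n a b (tau2 n a) b (shiftmx k b b b.-1).
  by apply: shiftmx_Tmap; [lia | rewrite /tau2 b_max; congr (_ %% _); lia].
apply: (Dfactors_concentrated (i1 := Ordinal X_pos) (j1 := Ordinal X_last) conc fT gT
  _ _ h1T _ Psi_nz); rewrite shiftmx_id ?oner_neq0 //=; lia.
Qed.

End SubwingTriple.

Theorem lemma2p2 (k : closedFieldType) (n a b c y1 y2 z1 z2 : nat) :
  (2 <= n)%N -> (3 <= b <= n - 1)%N -> (1 <= c <= b - 2)%N ->
  in_wing n a c y1 y2 -> in_wing n (a + c + 1) (b - c - 1) z1 z2 ->
  [/\ (* (i) *)
      (forall f : 'M[k]_(y2, z2), is_Tmap n z1 z2 y1 y2 f -> f = 0%R),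
      (* (ii) *)
      (forall f : 'M[k]_(z2, y2), is_Tmap n y1 y2 z1 z2 f -> f = 0%R),
      (* (iii) *)
      ((exists Psi : 'M[k]_(z2, y2), Dmap_nz n z1 z2 y1 y2 Psi) <->
         left_edge n (a + c + 1) (b - c - 1) z1 z2 /\ right_edge n a c y1 y2) /\
      (forall Psi : 'M[k]_(z2, y2), Dmap_nz n z1 z2 y1 y2 Psi ->
         Dfactors n z1 z2 y1 y2 (a + c + 1) (b - c - 1) a c Psi) &
      (* (iv) *)
      ((exists Psi : 'M[k]_(y2, z2), Dmap_nz n y1 y2 z1 z2 Psi) <->
         [/\ right_edge n (a + c + 1) (b - c - 1) z1 z2, left_edge n a c y1 y2
           & b = (n - 1)%N]) /\
      (forall Psi : 'M[k]_(y2, z2), Dmap_nz n y1 y2 z1 z2 Psi ->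
         Dfactors n y1 y2 z1 z2 a b a b Psi)].
Proof.
move=> _ Hb Hc HY HZ; split; [ | | split | split].
- exact: (Tmap_Y'Z'_eq0 Hb Hc HY HZ).
- exact: (Tmap_Z'Y'_eq0 Hb Hc HY HZ).
- exact: (Dmap_Z'Y'_exists_iff Hb Hc HY HZ).
- exact: (Dmap_Z'Y'_factors Hb Hc HY HZ).
- exact: (Dmap_Y'Z'_exists_iff Hb Hc HY HZ).
- exact: (Dmap_Y'Z'_factors Hb Hc HY HZ).
Qed.
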